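(* Let $G$ be a group, $E$ a real Banach space, $f\colon G\to E$ a $(G;E)$-pseudo-Jensen function, and $b\in G$ an element of order two. Then $f(b^{-1}xb)=f(x)$ for all $x\in G$.
   Context: A function $f\colon G\to E$ is $(G;E)$-pseudo-Jensen if there is $c>0$ with $\|f(xy)+f(xy^{-1})-2f(x)\|\le c$ for all $x,y\in G$, and $f(x^n)=nf(x)$ for all $x\in G$, $n\in\mathbb{Z}$. *)

From HB Require Import structures.
From mathcomp Require Import all_boot all_order all_algebra.
From mathcomp Require Import monoid.
From mathcomp Require Import all_classical all_reals all_analysis.
Set Implicit Arguments. Unset Strict Implicit. Unset Printing Implicit Defensive.
Import Order.TTheory GRing.Theory Num.Theory.
Import numFieldNormedType.Exports.
Local Open Scope ring_scope.

Definition zpowg (G : groupType) (x : G) (z : int) : G :=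
  match z with
  | Posz n => (x ^+ n)%g
  | Negz n => (x ^- n.+1)%g
  end.

Definition pseudo_Jensen (R : realType) (G : groupType)
    (E : normedModType R) (f : G -> E) : Prop :=
  (exists2 c : R, 0 < c &
     forall x y : G, `| f (x * y)%g + f (x * y^-1)%g - 2%:R *: f x | <= c)
  /\ (forall (x : G) (n : int), f (zpowg x n) = n%:~R *: f x).

Definition order_two (G : groupType) (b : G) : Prop :=
  (b ^+ 2)%g = 1%g /\ b <> 1%g.

From HB Require Import structures.
From mathcomp Require Import all_boot all_order all_algebra.
From mathcomp Require Import monoid.
From mathcomp Require Import all_classical all_reals all_analysis.
Set Implicit Arguments. Unset Strict Implicit. Unset Printing Implicit Defensive.
Import Order.TTheory GRing.Theory Num.Theory.
Import numFieldNormedType.Exports.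
Local Open Scope ring_scope.

(* Since b = b^-1, the Jensen inequalities at (b x, b) and at (x^-1, b) bound
   2 f(b x b) - 2 f(b x) and 2 f(x) - 2 f(b x) (f is odd), so the difference
   f(x^b) - f(x) is bounded uniformly in x.  Replacing x by x^n multiplies this
   difference by n, because conjugation commutes with powers and f is
   homogeneous; a bounded quantity with unbounded multiples is zero. *)

Lemma natr_mul_bounded_eq0 (R : archiRealFieldType) (a C : R) :
  0 <= a -> (forall n : nat, n%:R * a <= C) -> a = 0.
Proof.
move=> a_ge0 bounded; apply/eqP; rewrite eq_le a_ge0 andbT.
apply/negP => /negP; rewrite -ltNge => a_gt0.
have := bounded (Num.truncn (C / a)).+1.
by apply/negP; rewrite -ltNge -ltr_pdivrMr // truncnS_gt.
Qed.

Section PseudoJensen.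

Variables (R : archiRealFieldType) (G : groupType) (E : normedModType R).
Variables (f : G -> E) (c : R).

Hypothesis f_Jensen :
  forall x y : G, `|f (x * y)%g + f (x * y^-1)%g - 2%:R *: f x| <= c.
Hypothesis f_hom : forall (x : G) (n : int), f (zpowg x n) = n%:~R *: f x.

Lemma pseudo_Jensen_expg (x : G) (n : nat) : f (x ^+ n)%g = n%:R *: f x.
Proof. exact: f_hom x (Posz n). Qed.

Lemma pseudo_Jensen_invg (x : G) : f (x^-1)%g = - f x.
Proof. by have := f_hom x (Negz 0); rewrite /= expg1 NegzE scaleNr scale1r. Qed.

Lemma pseudo_Jensen_conjg_bounded (b : G) :
  (b^-1 = b)%g -> forall x : G, `|f (x ^ b)%g - f x| <= c.
Proof.
move=> bV x.
have bxb : (x ^ b = b * x * b)%g by rewrite conjgE bV mulgA.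
have Jbx := f_Jensen (b * x) b.
have Jxinv := f_Jensen (x^-1) b.
rewrite bV -bxb in Jbx.
have xinv_b : (x^-1 * b = (b * x)^-1)%g by rewrite invgM bV.
rewrite bV xinv_b !pseudo_Jensen_invg in Jxinv.
set u := f (x ^ b)%g in Jbx *; set v := f (b * x)%g in Jbx Jxinv.
have split2 : 2%:R *: (u - f x) =
    (u + u - 2%:R *: v) - (- v + - v - 2%:R *: - f x).
  rewrite !scaler_nat !mulr2n !opprD !opprK !addrA !addrNK.
  by congr (_ + _); rewrite addrAC.
have : `|2%:R *: (u - f x)| <= 2%:R * c.
  rewrite split2 mulr2n mulrDl mul1r.
  exact: le_trans (ler_normB _ _) (lerD Jbx Jxinv).
by rewrite normrZ normr_nat ler_pM2l.
Qed.

Lemma pseudo_Jensen_conjg_eq (b : G) (C : R) :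
  (forall x : G, `|f (x ^ b)%g - f x| <= C) -> forall x : G, f (x ^ b)%g = f x.
Proof.
move=> bounded x; apply/eqP; rewrite -subr_eq0 -normr_eq0; apply/eqP.
apply: (@natr_mul_bounded_eq0 _ _ C (normr_ge0 _)) => n.
have := bounded (x ^+ n)%g.
by rewrite conjXg !pseudo_Jensen_expg -scalerBr normrZ normr_nat.
Qed.

End PseudoJensen.

Theorem lemma3p13 (R : realType) (G : groupType) (E : completeNormedModType R)
    (f : G -> E) (b : G) :
  pseudo_Jensen f -> order_two b ->
  forall x : G, f (b^-1 * x * b)%g = f x.
Proof.
move=> [[c _ f_Jensen] f_hom] [b2 _] x.
have bV : (b^-1 = b)%g by apply: mulg1_eq; rewrite -expg2.
rewrite -mulgA -conjgE.
exact: pseudo_Jensen_conjg_eq (pseudo_Jensen_conjg_bounded f_Jensen f_hom bV) x.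
Qed.
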